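(* Every point of $\Delta$ with both coordinates rational belongs to $\bigcup_{n\ge0}\bigcup_{k_1,\dots,k_n\in\mathbb N}H_{k_1}\circ\cdots\circ H_{k_n}(\partial\Delta)$ (where the term $n=0$ is $\partial\Delta$ itself).
   Context: $\Delta=\{(u,v)\in\mathbb R^2:u\ge0,v\ge0,u+v\le1\}$, with boundary $\partial\Delta$. For $k\in\mathbb N$, $H_k:\Delta\to\Delta$ is $H_k(u,v)=\frac{1}{k(1-v)+1-u}(v,1-v)$. *)

From Stdlib Require Import Reals QArith List.
Open Scope R_scope.

Definition TriDelta (p : R * R) : Prop :=
  0 <= fst p /\ 0 <= snd p /\ fst p + snd p <= 1.

Definition bdDelta (p : R * R) : Prop :=
  TriDelta p /\ (fst p = 0 \/ snd p = 0 \/ fst p + snd p = 1).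

Definition H (k : nat) (p : R * R) : R * R :=
  let u := fst p in let v := snd p in
  let d := INR k * (1 - v) + 1 - u in
  (v / d, (1 - v) / d).

Definition Hcomp (ks : list nat) (p : R * R) : R * R :=
  fold_right H p ks.

Definition is_rational (x : R) : Prop := exists q : Q, Q2R q = x.

From Stdlib Require Import Reals QArith List.
From Stdlib Require Import Lra Lia ZArith.
Open Scope R_scope.

(** Write the point as (a/q, b/q) with a, b, q natural numbers, and induct on q.
    If the point is not on an edge then 0 < a, 0 < b and a + b < q; choosing
    k >= 1 with k b + a <= q < k b + a + b gives
    (a/q, b/q) = H_k (c/(a+b), a/(a+b)) with c = k b + a + b - q <= b, a point
    of the triangle with the strictly smaller denominator a + b. *)

Lemma Rdiv_le_1_iff (x y : R) : 0 < y -> x / y <= 1 <-> x <= y.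
Proof.
  intros Hy. unfold Rdiv. split; intros Hxy.
  - apply (Rmult_le_compat_r y) in Hxy; [|lra].
    rewrite Rmult_assoc, Rinv_l in Hxy by lra. lra.
  - apply (Rmult_le_reg_r y); [exact Hy|].
    rewrite Rmult_assoc, Rinv_l by lra. lra.
Qed.

Lemma exists_div_window (a b q : nat) :
  (0 < b)%nat -> (a + b < q)%nat ->
  exists k, (1 <= k)%nat /\ (k * b + a <= q < k * b + a + b)%nat.
Proof.
  intros Hb Hq. exists ((q - a) / b)%nat.
  pose proof (Nat.div_mod_eq (q - a) b) as Hdiv.
  pose proof (Nat.mod_upper_bound (q - a) b ltac:(lia)) as Hmod.
  assert (1 <= (q - a) / b)%nat by (apply Nat.div_le_lower_bound; lia).
  nia.
Qed.

Definition reachable (p : R * R) : Prop :=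
  exists (ks : list nat) (p0 : R * R),
    Forall (fun k => (1 <= k)%nat) ks /\ bdDelta p0 /\ Hcomp ks p0 = p.

Lemma reachable_bd (p : R * R) : bdDelta p -> reachable p.
Proof. intros Hp. exists nil, p. auto. Qed.

Lemma reachable_H (k : nat) (p : R * R) :
  (1 <= k)%nat -> reachable p -> reachable (H k p).
Proof.
  intros Hk [ks [p0 [Hks [Hp0 Hc]]]].
  exists (k :: ks), p0. simpl. rewrite Hc. auto.
Qed.

Lemma H_frac (k : nat) (a b c q : R) :
  a + b <> 0 -> q <> 0 -> c + q = INR k * b + a + b ->
  H k (c / (a + b), a / (a + b)) = (a / q, b / q).
Proof.
  intros Hs Hq Hc. unfold H; simpl.
  replace (INR k * (1 - a / (a + b)) + 1 - c / (a + b)) with (q / (a + b)).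
  2: { replace q with (INR k * b + a + b - c) by lra. field. exact Hs. }
  f_equal; field; auto.
Qed.

Lemma TriDelta_frac (a b q : nat) :
  (0 < q)%nat -> (a + b <= q)%nat -> TriDelta (INR a / INR q, INR b / INR q).
Proof.
  intros Hq Hab. apply lt_0_INR in Hq. apply le_INR in Hab. rewrite plus_INR in Hab.
  pose proof (pos_INR a). pose proof (pos_INR b).
  unfold TriDelta; simpl. repeat split.
  - apply Rle_mult_inv_pos; lra.
  - apply Rle_mult_inv_pos; lra.
  - rewrite <- Rdiv_plus_distr. apply Rdiv_le_1_iff; lra.
Qed.

Lemma reachable_frac (q a b : nat) :
  (0 < q)%nat -> (a + b <= q)%nat -> reachable (INR a / INR q, INR b / INR q).
Proof.
  revert a b. induction q as [q IH] using lt_wf_ind. intros a b Hq Hab.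
  assert (Rq : INR q <> 0) by (apply not_0_INR; lia).
  destruct (Nat.eq_dec a 0) as [-> | Ha].
  { apply reachable_bd. split; [now apply TriDelta_frac|].
    left; simpl. unfold Rdiv; ring. }
  destruct (Nat.eq_dec b 0) as [-> | Hb].
  { apply reachable_bd. split; [now apply TriDelta_frac|].
    right; left; simpl. unfold Rdiv; ring. }
  destruct (Nat.eq_dec (a + b) q) as [Hs | Hs].
  { apply reachable_bd. split; [now apply TriDelta_frac|].
    right; right; simpl. rewrite <- Rdiv_plus_distr, <- plus_INR, Hs.
    now apply Rdiv_diag. }
  destruct (exists_div_window a b q ltac:(lia) ltac:(lia)) as [k [Hk Hwin]].
  set (c := (k * b + a + b - q)%nat).
  assert (Hcq : (c + q = k * b + a + b)%nat) by (unfold c; lia).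
  rewrite <- (H_frac k (INR a) (INR b) (INR c) (INR q)); auto.
  - rewrite <- plus_INR. apply reachable_H; [exact Hk|].
    apply IH; lia.
  - rewrite <- plus_INR. apply not_0_INR. lia.
  - apply (f_equal INR) in Hcq. rewrite !plus_INR, mult_INR in Hcq. lra.
Qed.

Lemma nonneg_rational_frac (u : R) :
  0 <= u -> is_rational u -> exists n d : nat, (0 < d)%nat /\ u = INR n / INR d.
Proof.
  intros Hu [[z p] <-]. unfold Q2R in *; simpl in *.
  assert (Hp : 0 < IZR (Z.pos p)) by (apply IZR_lt; lia).
  assert (Hz : (0 <= z)%Z).
  { apply le_IZR. apply (Rmult_le_reg_r (/ IZR (Z.pos p))).
    - now apply Rinv_0_lt_compat.
    - lra. }
  exists (Z.to_nat z), (Pos.to_nat p). split; [lia|].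
  now rewrite !INR_IZR_INZ, Z2Nat.id, positive_nat_Z.
Qed.

Lemma TriDelta_rational_frac (u v : R) :
  TriDelta (u, v) -> is_rational u -> is_rational v ->
  exists a b q : nat, (0 < q)%nat /\ (a + b <= q)%nat /\
    u = INR a / INR q /\ v = INR b / INR q.
Proof.
  intros [Hu [Hv Huv]] Ru Rv; simpl in *.
  destruct (nonneg_rational_frac u Hu Ru) as [n1 [d1 [Hd1 ->]]].
  destruct (nonneg_rational_frac v Hv Rv) as [n2 [d2 [Hd2 ->]]].
  apply lt_0_INR in Hd1, Hd2.
  exists (n1 * d2)%nat, (n2 * d1)%nat, (d1 * d2)%nat.
  rewrite !mult_INR. repeat split.
  - apply INR_lt. rewrite mult_INR. simpl. nra.
  - apply INR_le. rewrite plus_INR, !mult_INR.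
    assert (E : INR n1 / INR d1 + INR n2 / INR d2
                = (INR n1 * INR d2 + INR n2 * INR d1) / (INR d1 * INR d2))
      by (field; lra).
    rewrite E, Rdiv_le_1_iff in Huv by nra. lra.
  - field; lra.
  - field; lra.
Qed.

Theorem proposition3p9 (u v : R) :
  TriDelta (u, v) -> is_rational u -> is_rational v ->
  exists (ks : list nat) (p : R * R),
    Forall (fun k => (1 <= k)%nat) ks /\ bdDelta p /\ Hcomp ks p = (u, v).
Proof.
  intros Huv Ru Rv.
  destruct (TriDelta_rational_frac u v Huv Ru Rv) as [a [b [q [Hq [Hab [-> ->]]]]]].
  exact (reachable_frac q a b Hq Hab).
Qed.
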